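(* Assume the standing conventions of the context, and suppose $\mathcal D_{Z,Z'}\neq\emptyset$. Then: (i) there is a set $\Psi'_0$ of pairwise disjoint consecutive pairs in $Z'_{\mathrm I}$ such that $D_Z=\{\Lambda_{\Psi'}\mid \Psi'\le\Psi'_0\}$; (ii) there is a set $\Psi_0$ of pairwise disjoint consecutive pairs in $Z_{\mathrm I}$ such that $D_{Z'}=\{\Lambda_{\Psi}\mid \Psi\le\Psi_0\}$. (In fact $\Psi'_0$ may be taken to be the union of all consecutive pairs $\Psi'$ in $Z'_{\mathrm I}$ with $(Z,\Lambda_{\Psi'})\in\mathcal D_{Z,Z'}$, and $\Psi_0$ the union of all consecutive pairs $\Psi$ in $Z_{\mathrm I}$ with $(\Lambda_\Psi,Z')\in\mathcal D_{Z,Z'}$.)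
   Context: A symbol is an array $\Lambda=\binom{a'_1,\ldots,a'_{m_1}}{b'_1,\ldots,b'_{m_2}}$ of two strictly decreasing finite sequences of nonnegative integers (top row, bottom row); its defect is $\mathrm{def}(\Lambda)=m_1-m_2$. Standing assumptions: $Z=\binom{a_1,\ldots,a_{m+1}}{b_1,\ldots,b_m}$ is a special symbol of defect $1$, i.e. $a_1\ge b_1\ge a_2\ge b_2\ge\cdots\ge b_m\ge a_{m+1}$; $Z'=\binom{c_1,\ldots,c_{m'}}{d_1,\ldots,d_{m'}}$ is a special symbol of defect $0$, i.e. $c_1\ge d_1\ge c_2\ge d_2\ge\cdots\ge c_{m'}\ge d_{m'}$; and $m'\in\{m,m+1\}$. For a symbol $Y$, $Y_{\mathrm I}$ is the set of entries of $Y$ occurring in exactly one row. For $M\subset Z_{\mathrm I}$, $\Lambda_M$ is the symbol obtained from $Z$ by moving every entry of $M$ to the other row (rows re-sorted decreasingly); for $N\subset Z'_{\mathrm I}$, $\Lambda_N$ is obtained from $Z'$ in the same way. $\overline{\mathcal S}_Z=\{\Lambda_M: M\subset Z_{\mathrm I}\}$, $\overline{\mathcal S}_{Z'}=\{\Lambda_N:N\subset Z'_{\mathrm I}\}$; $\mathcal S_{Z,1}$ (resp. $\mathcal S_{Z',0}$) is the set of elements of $\overline{\mathcal S}_Z$ of defect $1$ (resp. of $\overline{\mathcal S}_{Z'}$ of defect $0$). A consecutive pair in $Z'_{\mathrm I}$ is a two-element subset $\{c_k,d_l\}\subset Z'_{\mathrm I}$, written $\binom{c_k}{d_l}$, with $l\in\{k-1,k\}$;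 a consecutive pair in $Z_{\mathrm I}$ is $\{a_k,b_l\}\subset Z_{\mathrm I}$, written $\binom{a_k}{b_l}$, with $l\in\{k-1,k\}$. For a set $\Psi_0$ of pairwise disjoint consecutive pairs, viewed also as the subset given by the union of its pairs, $\Psi\le\Psi_0$ means that $\Psi$ is the union of some (possibly none) of the pairs in $\Psi_0$. Relation $\overline{\mathcal B}^+_{Z,Z'}\subset\overline{\mathcal S}_Z\times\overline{\mathcal S}_{Z'}$: for $\Lambda=\binom{a'_1,\ldots,a'_{m_1}}{b'_1,\ldots,b'_{m_2}}\in\overline{\mathcal S}_Z$ and $\Lambda'=\binom{c'_1,\ldots,c'_{m'_1}}{d'_1,\ldots,d'_{m'_2}}\in\overline{\mathcal S}_{Z'}$, $(\Lambda,\Lambda')\in\overline{\mathcal B}^+_{Z,Z'}$ iff $\mathrm{def}(\Lambda')=1-\mathrm{def}(\Lambda)$ and: if $m'=m$, $a'_i>d'_i\ge a'_{i+1}$ for $1\le i\le m'_2$ and $b'_{i-1}>c'_i\ge b'_i$ for $1\le i\le m'_1$; if $m'=m+1$, $a'_i\ge d'_i>a'_{i+1}$ for $1\le i\le m'_2$ and $b'_{i-1}\ge c'_i>b'_i$ for $1\le i\le m'_1$; here $b'_0=+\infty$ and nonexistent entries $a'_j,b'_j$ beyond the row lengths are $-\infty$. Then $\mathcal D_{Z,Z'}=\overline{\mathcal B}^+_{Z,Z'}\cap(\mathcal S_{Z,1}\times\mathcal S_{Z',0})$, $D_Z=\{\Lambda'\mid (Z,\Lambda')\in\mathcal D_{Z,Z'}\}$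 and $D_{Z'}=\{\Lambda\mid(\Lambda,Z')\in\mathcal D_{Z,Z'}\}$. *)

From mathcomp Require Import all_boot all_order all_algebra.
Set Implicit Arguments. Unset Strict Implicit. Unset Printing Implicit Defensive.

(* A symbol (top row, bottom row); rows are finite sequences of naturals,
   listed in decreasing order (index 0 = first entry a'_1). *)
Definition symbol := (seq nat * seq nat)%type.

Definition sdecr (s : seq nat) : bool := sorted (fun x y => y < x) s.

Definition is_symbol (L : symbol) : bool := sdecr L.1 && sdecr L.2.

Definition defect (L : symbol) : int := ((size L.1)%:Z - (size L.2)%:Z)%R.

(* Y_I : entries occurring in exactly one row. *)
Definition singles (Y : symbol) : seq nat :=
  [seq x <- Y.1 ++ Y.2 | (x \in Y.1) != (x \in Y.2)].

(* Lambda_M : move every entry of M to the other row, re-sort decreasingly. *)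
Definition moveM (Y : symbol) (M : seq nat) : symbol :=
  (sort geq ([seq x <- Y.1 | x \notin M] ++ [seq x <- Y.2 | x \in M]),
   sort geq ([seq x <- Y.2 | x \notin M] ++ [seq x <- Y.1 | x \in M])).

Definition Sbar (Y L : symbol) : Prop :=
  exists M : seq nat, {subset M <= singles Y} /\ L = moveM Y M.

Definition special1 (Z : symbol) : Prop :=
  is_symbol Z /\ size Z.1 = (size Z.2).+1 /\
  forall i, i < size Z.2 ->
    nth 0 Z.2 i <= nth 0 Z.1 i /\ nth 0 Z.1 i.+1 <= nth 0 Z.2 i.

Definition special0 (Z' : symbol) : Prop :=
  is_symbol Z' /\ size Z'.1 = size Z'.2 /\
  (forall i, i < size Z'.2 -> nth 0 Z'.2 i <= nth 0 Z'.1 i) /\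
  (forall i, i.+1 < size Z'.1 -> nth 0 Z'.1 i.+1 <= nth 0 Z'.2 i).

(* Comparisons with entries that may be nonexistent (= -infinity);
   [onth s i] is [None] (-infinity) beyond the row length. *)
Definition gtO (x : option nat) (y : nat) : bool :=
  if x is Some a then y < a else false.
Definition geO (x : option nat) (y : nat) : bool :=
  if x is Some a then y <= a else false.
Definition ltO (x : option nat) (y : nat) : bool :=
  if x is Some a then a < y else true.
Definition leO (x : option nat) (y : nat) : bool :=
  if x is Some a then a <= y else true.

(* The relation \bar B^+_{Z,Z'} (0-indexed: index i here is i+1 in the paper).
   m = size Z.2, m' = size Z'.1. *)
Definition Bplus (Z Z' : symbol) (L L' : symbol) : Prop :=
  (defect L' = 1 - defect L)%R /\
  let a := L.1 in let b := L.2 in let c := L'.1 in let d := L'.2 in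
  if size Z'.1 == size Z.2 then
    (forall i, i < size d ->
       gtO (onth a i) (nth 0 d i) && leO (onth a i.+1) (nth 0 d i)) /\
    (forall i, i < size c ->
       ((i == 0) || gtO (onth b i.-1) (nth 0 c i)) && leO (onth b i) (nth 0 c i))
  else
    (forall i, i < size d ->
       geO (onth a i) (nth 0 d i) && ltO (onth a i.+1) (nth 0 d i)) /\
    (forall i, i < size c ->
       ((i == 0) || geO (onth b i.-1) (nth 0 c i)) && ltO (onth b i) (nth 0 c i)).

Definition Drel (Z Z' L L' : symbol) : Prop :=
  Bplus Z Z' L L' /\
  (Sbar Z L /\ defect L = 1%R) /\ (Sbar Z' L' /\ defect L' = 0%R).

(* A consecutive pair in Y_I, written (x, y) = (top_k, bottom_l) with
   l in {k-1, k} (1-indexed), i.e. l = k or l + 1 = k 0-indexed. *)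
Definition cons_pair (Y : symbol) (p : nat * nat) : Prop :=
  exists k l, [/\ k < size Y.1, l < size Y.2, (l == k) || (l.+1 == k),
    p = (nth 0 Y.1 k, nth 0 Y.2 l) &
    (p.1 \in singles Y) && (p.2 \in singles Y)].

Definition pairs_union (P : seq (nat * nat)) : seq nat :=
  flatten [seq [:: p.1; p.2] | p <- P].

Definition disj_cons_pairs (Y : symbol) (P0 : seq (nat * nat)) : Prop :=
  (forall p, p \in P0 -> cons_pair Y p) /\ uniq (pairs_union P0).

From mathcomp Require Import all_boot all_order all_algebra.
From mathcomp Require Import zify.
From Stdlib Require Import Classical.
Set Implicit Arguments. Unset Strict Implicit. Unset Printing Implicit Defensive.

(* A decreasing row s of naturals is determined by its counting function
   cnt_ge s t = #{x in s | x >= t}.  The interlacing conditions defining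
   B^+_{Z,Z'} become inequalities between counting functions
   (interleave_below_cnt, interleave_above_cnt, Bplus_cnt_A/B), and for a move
   Lambda_M = moveM Y M the top counting function cnt_top Y M only sees which
   entries moved.  Fixing Z (resp. Z') in D_{Z,Z'} thus becomes a pointwise
   constraint "V t (cnt_ge L.1 t) for all t" on the moving symbol L, given by
   one of two windows (Drel_left_Z, Drel_right_Z').

   The core result valid_moves_pair_unions holds for any interlaced symbol Y
   and any "admissible" constraint V: the valid moves of Y are exactly the
   moves by unions of sub-families of the good pairs of Y, which are pairwise
   disjoint consecutive pairs.  One direction pairs every moved entry with a
   neighbouring moved entry (partner_exists); the other shows that at each t
   at most one good pair is separated by t (good_pairs_separation).  Both
   windows are admissible once the totals of Z and Z' interlace, which any
   element of D_{Z,Z'} forces (Drel_totals); the proposition follows. *)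

(* * Counting functions of decreasing rows *)

Definition cnt_ge (s : seq nat) (t : nat) : nat := count (fun x => t <= x) s.

Lemma geq_trans : transitive geq.
Proof. move=> x y z /= h1 h2; exact: leq_trans h2 h1. Qed.

Lemma count_ge_below (s : seq nat) (Q : pred nat) t :
  (forall z, z \in s -> z < t) -> count (fun z => (t <= z) && Q z) s = 0.
Proof.
move=> h; apply/eqP; rewrite -leqn0 leqNgt -has_count; apply/hasPn => z zs.
by rewrite leqNgt (h z zs).
Qed.

Lemma cnt_ge_below (s : seq nat) t : (forall z, z \in s -> z < t) -> cnt_ge s t = 0.
Proof.
move=> h; rewrite /cnt_ge -(count_ge_below predT h).
by apply: eq_count => z; rewrite andbT.
Qed.

Lemma cnt_ge_nth s t k : sorted geq s ->
  (k < cnt_ge s t) = (k < size s) && (t <= nth 0 s k).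
Proof.
elim: s k => [|x s IH] k /=; first by rewrite /cnt_ge /= ltn0.
move=> hp; have hs : sorted geq s by exact: path_sorted hp.
have hall := order_path_min geq_trans hp.
rewrite /cnt_ge /=; case: (leqP t x) => htx.
  case: k => [|k] /=; first by rewrite htx.
  by rewrite add1n ltnS -/(cnt_ge s t) IH.
have below : forall z, z \in s -> z < t.
  by move=> z zs; have := allP hall z zs => /= hz; exact: leq_ltn_trans hz htx.
rewrite -/(cnt_ge s t) (cnt_ge_below below) add0n.
case: k => [|k] /=; first by rewrite (leqNgt t x) htx.
rewrite ltn0 ltnS; case hk: (k < size s) => //=.
by rewrite leqNgt below // mem_nth.
Qed.

Lemma leq_of_ltn_bound A B : (forall k, k < A -> k < B) -> A <= B.
Proof. case: A => // A h; exact: h. Qed.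

Lemma sorted_dominance_cnt (x y : seq nat) e : sorted geq x -> sorted geq y ->
  (forall i, i < size y -> (i < size x) && (nth 0 y i + e <= nth 0 x i)) <->
  (forall t, cnt_ge y t <= cnt_ge x (t + e)).
Proof.
move=> sx sy; split.
- move=> h t; apply: leq_of_ltn_bound => k; rewrite !cnt_ge_nth // => /andP[hk ht].
  have /andP[-> h2] := h k hk; rewrite /=.
  by apply: leq_trans h2; rewrite leq_add2r.
- move=> h i hi; have : i < cnt_ge y (nth 0 y i) by rewrite cnt_ge_nth // hi leqnn.
  by move=> /leq_trans /(_ (h _)); rewrite cnt_ge_nth.
Qed.

(* Dropping the largest entry lowers every count by at most one. *)
Lemma cnt_ge_behead x t y : sorted geq x ->
  (cnt_ge (behead x) t <= y) <-> (cnt_ge x t <= y + 1).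
Proof.
case: x => [|u x] /=; first by rewrite /cnt_ge /=; split=> _ //.
move=> hp; have hall := order_path_min geq_trans hp.
rewrite /cnt_ge /=; case: (leqP t u) => htu /=; first by rewrite add1n addn1 ltnS.
have below : forall z, z \in x -> z < t.
  by move=> z zs; have := allP hall z zs => /= hz; exact: leq_ltn_trans hz htu.
by rewrite -/(cnt_ge x t) (cnt_ge_below below); split=> _; lia.
Qed.

(* * Interleaving conditions as counting inequalities *)

Lemma onth_nthE (s : seq nat) i :
  onth s i = if i < size s then Some (nth 0 s i) else None.
Proof. by elim: s i => [|x s IH] [|i] //=. Qed.

Definition exceed_test (GO : option nat -> nat -> bool) (e : nat) : Prop :=
  forall s i y, GO (onth s i) y = (i < size s) && (y + e <= nth 0 s i).
Definition trail_test (LO : option nat -> nat -> bool) (e : nat) : Prop :=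
  forall s i y, LO (onth s i) y = (i < size s) ==> (nth 0 s i + e <= y).

Lemma gtO_exceed : exceed_test gtO 1.
Proof. by move=> s i y; rewrite onth_nthE; case: ifP => //= _; rewrite addn1. Qed.
Lemma geO_exceed : exceed_test geO 0.
Proof. by move=> s i y; rewrite onth_nthE; case: ifP => //= _; rewrite addn0. Qed.
Lemma leO_trail : trail_test leO 0.
Proof. by move=> s i y; rewrite onth_nthE; case: ifP => //= _; rewrite addn0. Qed.
Lemma ltO_trail : trail_test ltO 1.
Proof. by move=> s i y; rewrite onth_nthE; case: ifP => //= _; rewrite addn1. Qed.

Lemma interleave_below_cnt GO LO e1 e2 (a d : seq nat) :
  exceed_test GO e1 -> trail_test LO e2 ->
  sorted geq a -> sorted geq d -> size a <= (size d).+1 ->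
  (forall i, i < size d ->
     GO (onth a i) (nth 0 d i) && LO (onth a i.+1) (nth 0 d i)) <->
  ((forall t, cnt_ge d t <= cnt_ge a (t + e1)) /\
   (forall t, cnt_ge a t <= cnt_ge d (t + e2) + 1)).
Proof.
move=> hG hL sa sd hsz.
have sba : sorted geq (behead a) by case: a sa {hsz} => //= x a; exact: path_sorted.
have E : (forall t, cnt_ge a t <= cnt_ge d (t + e2) + 1) <->
         (forall t, cnt_ge (behead a) t <= cnt_ge d (t + e2)).
  by split=> h t; apply/(cnt_ge_behead _ _ sa).
rewrite -(sorted_dominance_cnt e1 sa sd) E -(sorted_dominance_cnt e2 sd sba).
split.
- move=> h; split=> i hi.
  + by have := h i hi; rewrite hG => /andP[].
  + have hi' : i < size d by move: hi hsz; rewrite size_behead; lia.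
    have := h i hi'; rewrite hL => /andP[_ /implyP]; rewrite hi' /=.
    have hi2 : i.+1 < size a by move: hi; rewrite size_behead; lia.
    by move/(_ hi2); rewrite -nth_behead.
- move=> [h1 h2] i hi; rewrite hG hL h1 //=; apply/implyP => hi2.
  have hi3 : i < size (behead a) by rewrite size_behead; lia.
  by have /andP[_] := h2 i hi3; rewrite nth_behead.
Qed.

Lemma interleave_above_cnt GO LO e1 e2 (b c : seq nat) :
  exceed_test GO e1 -> trail_test LO e2 ->
  sorted geq b -> sorted geq c -> size b <= size c ->
  (forall i, i < size c ->
     ((i == 0) || GO (onth b i.-1) (nth 0 c i)) && LO (onth b i) (nth 0 c i)) <->
  ((forall t, cnt_ge c t <= cnt_ge b (t + e1) + 1) /\
   (forall t, cnt_ge b t <= cnt_ge c (t + e2))).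
Proof.
move=> hG hL sb sc hsz.
have sbc : sorted geq (behead c) by case: c sc {hsz} => //= x c; exact: path_sorted.
have E : (forall t, cnt_ge c t <= cnt_ge b (t + e1) + 1) <->
         (forall t, cnt_ge (behead c) t <= cnt_ge b (t + e1)).
  by split=> h t; apply/(cnt_ge_behead _ _ sc).
rewrite E -(sorted_dominance_cnt e1 sb sbc) -(sorted_dominance_cnt e2 sc sb).
split.
- move=> h; split=> i hi.
  + have hi' : i.+1 < size c by move: hi; rewrite size_behead; lia.
    by have := h _ hi'; rewrite /= hG -nth_behead => /andP[].
  + have hi' : i < size c by lia.
    have := h i hi'; rewrite hL => /andP[_ /implyP]; rewrite hi /= => /(_ isT) ->.
    by rewrite hi'.
- move=> [h1 h2] i hi; rewrite hG hL; apply/andP; split.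
  + case: i hi => //= i hi; have hi3 : i < size (behead c) by rewrite size_behead; lia.
    by have := h1 i hi3; rewrite nth_behead.
  + by apply/implyP => hi2; have /andP[_] := h2 i hi2.
Qed.

(* * Counting functions of moved symbols *)

Definition cnt_top (Y : symbol) (N : seq nat) (t : nat) : nat :=
  count (fun z => (t <= z) && (z \notin N)) Y.1 +
  count (fun z => (t <= z) && (z \in N)) Y.2.

Lemma cnt_ge_move_top Y N t : cnt_ge (moveM Y N).1 t = cnt_top Y N t.
Proof.
rewrite /cnt_ge /moveM /cnt_top /= count_sort count_cat !count_filter.
by congr (_ + _); apply: eq_count => z; rewrite andbC.
Qed.

Lemma count_split_mem (s : seq nat) (Q : pred nat) (A : seq nat) :
  count Q s = count (fun z => Q z && (z \notin A)) s + count (fun z => Q z && (z \in A)) s.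
Proof. by elim: s => //= z s ->; case: (Q z); case: (z \in A) => /=; lia. Qed.

Lemma cnt_ge_move_total Y N t :
  cnt_ge (moveM Y N).1 t + cnt_ge (moveM Y N).2 t = cnt_ge Y.1 t + cnt_ge Y.2 t.
Proof.
have bot : cnt_ge (moveM Y N).2 t = count (fun z => (t <= z) && (z \notin N)) Y.2 +
                                      count (fun z => (t <= z) && (z \in N)) Y.1.
  rewrite /cnt_ge /moveM /= count_sort count_cat !count_filter.
  by congr (_ + _); apply: eq_count => z; rewrite andbC.
rewrite cnt_ge_move_top bot /cnt_top /cnt_ge.
by rewrite (count_split_mem Y.1 (fun z => t <= z) N) (count_split_mem Y.2 (fun z => t <= z) N); lia.
Qed.

Lemma sorted_move_top Y N : sorted geq (moveM Y N).1.
Proof. by apply: sort_sorted => x y /=; exact: leq_total. Qed.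
Lemma sorted_move_bot Y N : sorted geq (moveM Y N).2.
Proof. by apply: sort_sorted => x y /=; exact: leq_total. Qed.

Lemma cnt_ge0 s : cnt_ge s 0 = size s.
Proof. by rewrite /cnt_ge count_predT. Qed.

Lemma count_ge_split (s : seq nat) (Q : pred nat) t :
  count (fun z => (t <= z) && Q z) s =
  count (fun z => (t.+1 <= z) && Q z) s + count (fun z => (z == t) && Q z) s.
Proof.
elim: s => //= z s ->; case: (Q z); rewrite /= ?andbT ?andbF //=.
case: (eqVneq z t) => [->|ne]; first by rewrite leqnn ltnn; lia.
have -> : (t <= z) = (t < z) by rewrite leq_eqVlt eq_sym (negbTE ne).
lia.
Qed.

Lemma count_eq_uniq (s : seq nat) (Q : pred nat) t : uniq s ->
  count (fun z => (z == t) && Q z) s = (t \in s) && Q t.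
Proof.
elim: s => //= z s IH /andP[zs us]; rewrite IH // in_cons.
case: (eqVneq z t) => [<-|ne] /=; first by rewrite (negbTE zs) /= addn0.
by case: ((t \in s) && Q t).
Qed.

Lemma cnt_ge_step s t : uniq s -> cnt_ge s t = cnt_ge s t.+1 + (t \in s).
Proof.
move=> us; have := count_ge_split s predT t; rewrite /cnt_ge.
have E (u : nat) : count (fun z => (u <= z) && predT z) s = count (fun z => u <= z) s.
  by apply: eq_count => z; rewrite andbT.
by rewrite !E => ->; rewrite count_eq_uniq //= andbT.
Qed.

Lemma cnt_top_step Y N t : uniq Y.1 -> uniq Y.2 ->
  cnt_top Y N t =
  cnt_top Y N t.+1 + ((t \in Y.1) && (t \notin N)) + ((t \in Y.2) && (t \in N)).
Proof.
move=> u1 u2; rewrite /cnt_top (count_ge_split Y.1 (fun z => z \notin N)).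
by rewrite (count_ge_split Y.2 (fun z => z \in N)) !count_eq_uniq // addnACA !addnA.
Qed.

Lemma cnt_ge_mono s t u : t <= u -> cnt_ge s u <= cnt_ge s t.
Proof.
move=> h; rewrite /cnt_ge; elim: s => //= z s IH.
case hu: (u <= z); first by rewrite (leq_trans h hu) /=; lia.
by rewrite add0n; exact: leq_trans IH (leq_addl _ _).
Qed.

(* * Interlaced symbols *)

(* The common shape of special symbols of defect 0 and 1:
   top_1 >= bot_1 >= top_2 >= bot_2 >= ... *)
Definition interlaced (Y : symbol) : Prop :=
  [/\ is_symbol Y, size Y.2 <= size Y.1 <= (size Y.2).+1,
      (forall i, i < size Y.2 -> nth 0 Y.2 i <= nth 0 Y.1 i) &
      (forall i, i.+1 < size Y.1 -> nth 0 Y.1 i.+1 <= nth 0 Y.2 i)].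

Lemma special1_interlaced Z : special1 Z -> interlaced Z.
Proof.
move=> [hs [hsz h]]; split=> //; first by rewrite hsz leqnSn leqnn.
- by move=> i /h [].
- by move=> i; rewrite hsz ltnS => /h [].
Qed.

Lemma special0_interlaced Z : special0 Z -> interlaced Z.
Proof. by move=> [hs [hsz [h1 h2]]]; split=> //; rewrite hsz leqnn leqnSn. Qed.

Lemma sdecr_geq s : sdecr s -> sorted geq s.
Proof. by apply: sub_sorted => x y /=; exact: ltnW. Qed.

Lemma sdecr_uniq s : sdecr s -> uniq s.
Proof.
apply: sorted_uniq; first by move=> x y z /= h1 h2; exact: ltn_trans h2 h1.
by move=> x /=; rewrite ltnn.
Qed.

Lemma interlaced_facts Y : interlaced Y ->
  [/\ sorted geq Y.1, sorted geq Y.2, uniq Y.1, uniq Y.2 &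
      forall t, cnt_ge Y.2 t <= cnt_ge Y.1 t <= cnt_ge Y.2 t + 1].
Proof.
move=> [/andP[s1 s2] /andP[hs1 hs2] h1 h2].
have g1 := sdecr_geq s1; have g2 := sdecr_geq s2.
split; try exact: sdecr_uniq; rewrite //.
move=> t; apply/andP; split.
- apply: leq_of_ltn_bound => k; rewrite !cnt_ge_nth // => /andP[hk ht].
  by rewrite (leq_trans hk hs1) /=; exact: leq_trans ht (h1 _ hk).
- rewrite addn1; apply: leq_of_ltn_bound => -[|k] //.
  rewrite !cnt_ge_nth // => /andP[hk ht]; rewrite ltnS.
  have hk2 : k < size Y.2 by lia.
  by rewrite cnt_ge_nth // hk2 (leq_trans ht (h2 _ hk)).
Qed.

Lemma nth_dec s i j : sorted geq s -> i <= j -> j < size s -> nth 0 s j <= nth 0 s i.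
Proof.
move=> hs hij hj.
have := @sorted_leq_nth _ geq geq_trans (fun x => leqnn x) 0 s hs i j.
by rewrite !inE => /(_ (leq_ltn_trans hij hj) hj hij).
Qed.

Lemma nth_sdec s i j : sdecr s -> i < j -> j < size s -> nth 0 s j < nth 0 s i.
Proof.
move=> hs hij hj.
have tr : transitive (fun x y : nat => y < x).
  by move=> x y z /= h1 h2; exact: ltn_trans h2 h1.
have := @sorted_ltn_nth _ (fun x y : nat => y < x) tr 0 s hs i j.
by rewrite !inE => /(_ (ltn_trans hij hj) hj hij).
Qed.

Definition entry (Y : symbol) (z : nat) : bool := (z \in Y.1) || (z \in Y.2).

Definition no_entry_between (Y : symbol) (u v : nat) : Prop :=
  forall z, entry Y z -> ~ (minn u v < z < maxn u v).

Lemma interlaced_gap_bot Y k l : interlaced Y ->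
  l.+1 < k -> k < size Y.1 -> l < size Y.2 ->
  nth 0 Y.1 k <= nth 0 Y.2 l.+1 < nth 0 Y.2 l /\ l.+1 < size Y.2.
Proof.
move=> [/andP[s1 s2] /andP[hs1 hs2] _ h2] hlk hk hl.
have hl1 : l.+1 < size Y.2 by lia.
split=> //; rewrite nth_sdec // andbT.
apply: leq_trans (nth_dec (sdecr_geq s1) hlk hk) (h2 _ _); lia.
Qed.

Lemma interlaced_gap_top Y k l : interlaced Y ->
  k < l -> k < size Y.1 -> l < size Y.2 ->
  nth 0 Y.2 l <= nth 0 Y.1 k.+1 < nth 0 Y.1 k /\ k.+1 < size Y.1.
Proof.
move=> [/andP[s1 s2] /andP[hs1 hs2] h1 _] hkl hk hl.
have hk1 : k.+1 < size Y.1 by lia.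
split=> //; rewrite nth_sdec // andbT.
apply: leq_trans (nth_dec (sdecr_geq s2) hkl hl) (h1 _ _); lia.
Qed.

Lemma adjacent_cons_pair Y x y : interlaced Y ->
  x \in Y.1 -> x \notin Y.2 -> y \in Y.2 -> y \notin Y.1 ->
  no_entry_between Y x y -> cons_pair Y (x, y).
Proof.
move=> hY xp xq yq yp hadj.
set k := index x Y.1; set l := index y Y.2.
have hk : k < size Y.1 by rewrite index_mem.
have hl : l < size Y.2 by rewrite index_mem.
have ex : nth 0 Y.1 k = x by exact: nth_index.
have ey : nth 0 Y.2 l = y by exact: nth_index.
have sing : (x \in singles Y) && (y \in singles Y).
  by rewrite /singles !mem_filter /= !mem_cat xp yq (negbTE xq) (negbTE yp).
exists k, l; split=> //; last by rewrite ex ey.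
case: (ltngtP l k) => hlk; last by rewrite ?hlk ?eqxx.
- case: (eqVneq l.+1 k) => [_ //|ne]; exfalso.
  have hlk2 : l.+1 < k by lia.
  have [/andP[w1 w2] hw] := interlaced_gap_bot hY hlk2 hk hl.
  rewrite ex ey in w1 w2.
  have wx : nth 0 Y.2 l.+1 != x by apply/eqP => e; move: xq; rewrite -e mem_nth.
  apply: (hadj (nth 0 Y.2 l.+1)); first by rewrite /entry mem_nth ?orbT.
  by move: wx; rewrite neq_ltn => /orP[]; lia.
- exfalso.
  have [/andP[w1 w2] hw] := interlaced_gap_top hY hlk hk hl.
  rewrite ex ey in w1 w2.
  have wy : nth 0 Y.1 k.+1 != y by apply/eqP => e; move: yp; rewrite -e mem_nth.
  apply: (hadj (nth 0 Y.1 k.+1)); first by rewrite /entry mem_nth.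
  by move: wy; rewrite neq_ltn => /orP[]; lia.
Qed.

Lemma count_in_cons (s : seq nat) (P : pred nat) (z : nat) (N : seq nat) : uniq s -> z \notin N ->
  count (fun x => P x && (x \in z :: N)) s =
  count (fun x => P x && (x \in N)) s + (P z && (z \in s)).
Proof.
move=> + zN; elim: s => [|x s IH] /=; first by rewrite in_nil andbF.
move=> /andP[xs us]; rewrite IH // !in_cons.
case: (eqVneq x z) xs => [->|ne] xs /=.
  by rewrite (negbTE zN) (negbTE xs); case: (P z) => /=; lia.
by case: (P x); case: (x \in N); case: (P z && (z \in s)) => /=; lia.
Qed.

Lemma count_notin_cons (s : seq nat) (P : pred nat) (z : nat) (N : seq nat) : uniq s -> z \notin N ->
  count (fun x => P x && (x \notin z :: N)) s + (P z && (z \in s)) =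
  count (fun x => P x && (x \notin N)) s.
Proof.
move=> + zN; elim: s => [|x s IH] /=; first by rewrite in_nil andbF.
move=> /andP[xs us]; rewrite -IH // !in_cons negb_or.
case: (eqVneq x z) xs => [->|ne] xs /=.
  by rewrite (negbTE zN) (negbTE xs); case: (P z) => /=; lia.
by case: (P x); case: (x \in N); case: (P z && (z \in s)) => /=; lia.
Qed.

Lemma cnt_top_cons (Y : symbol) (z : nat) (N : seq nat) t : uniq Y.1 -> uniq Y.2 -> z \notin N ->
  cnt_top Y (z :: N) t + ((t <= z) && (z \in Y.1)) =
  cnt_top Y N t + ((t <= z) && (z \in Y.2)).
Proof.
move=> u1 u2 zN; rewrite /cnt_top (count_in_cons (fun x => t <= x) u2 zN).
by rewrite -(count_notin_cons (fun x => t <= x) u1 zN); lia.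
Qed.

Lemma cnt_top_nil (Y : symbol) t : cnt_top Y [::] t = cnt_ge Y.1 t.
Proof.
have nil0 : count (fun z => (t <= z) && (z \in [::])) Y.2 = 0.
  by rewrite -(count_pred0 Y.2); apply: eq_count => z; rewrite in_nil andbF.
by rewrite /cnt_top nil0 addn0; apply: eq_count => z; rewrite in_nil andbT.
Qed.

Definition split_pair (Y : symbol) (pr : nat * nat) : bool :=
  [&& pr.1 \in Y.1, pr.1 \notin Y.2, pr.2 \in Y.2 & pr.2 \notin Y.1].

Lemma cnt_top_pair_cons Y u v N t : uniq Y.1 -> uniq Y.2 -> split_pair Y (u, v) ->
  u \notin N -> v \notin N ->
  cnt_top Y (u :: v :: N) t + (t <= u) = cnt_top Y N t + (t <= v).
Proof.
move=> u1 u2 /and4P[up uq vq vp] uN vN.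
have uvN : u \notin v :: N.
  by rewrite in_cons negb_or uN andbT; apply/eqP => e; move: uq; rewrite e vq.
have h1 := cnt_top_cons t u1 u2 uvN; have h2 := cnt_top_cons t u1 u2 vN.
rewrite up (negbTE uq) vq (negbTE vp) !andbT !andbF in h1 h2; lia.
Qed.

Lemma cnt_top_pair Y u v t : uniq Y.1 -> uniq Y.2 -> split_pair Y (u, v) ->
  cnt_top Y [:: u; v] t + (t <= u) = cnt_ge Y.1 t + (t <= v).
Proof. by move=> u1 u2 h; rewrite (cnt_top_pair_cons t u1 u2 h) // cnt_top_nil. Qed.

Lemma pair_cnt_high Y u v t : uniq Y.1 -> uniq Y.2 -> split_pair Y (u, v) ->
  u < t -> t <= v -> cnt_top Y [:: u; v] t = cnt_ge Y.1 t + 1.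
Proof.
move=> n1 n2 h a b; have := cnt_top_pair t n1 n2 h.
by rewrite b (leqNgt t u) a /= addn0.
Qed.

Lemma pair_cnt_low Y u v t : uniq Y.1 -> uniq Y.2 -> split_pair Y (u, v) ->
  v < t -> t <= u -> cnt_top Y [:: u; v] t + 1 = cnt_ge Y.1 t.
Proof.
move=> n1 n2 h a b; have := cnt_top_pair t n1 n2 h.
by rewrite b (leqNgt t v) a /= addn0.
Qed.

Lemma pair_cnt_out Y u v t : uniq Y.1 -> uniq Y.2 -> split_pair Y (u, v) ->
  (t <= u) = (t <= v) -> cnt_top Y [:: u; v] t = cnt_ge Y.1 t.
Proof.
move=> n1 n2 h e; have := cnt_top_pair t n1 n2 h.
by rewrite e => /eqP; rewrite eqn_add2r => /eqP.
Qed.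

Lemma mem_pairs_union z P :
  (z \in pairs_union P) = has (fun pr : nat * nat => (z == pr.1) || (z == pr.2)) P.
Proof. by elim: P => //= pr P IH; rewrite !in_cons IH orbA. Qed.

Lemma cnt_top_union_unseparated Y P t : uniq Y.1 -> uniq Y.2 ->
  all (split_pair Y) P -> uniq (pairs_union P) ->
  (forall pr, pr \in P -> (t <= pr.1) = (t <= pr.2)) ->
  cnt_top Y (pairs_union P) t = cnt_ge Y.1 t.
Proof.
move=> u1 u2; elim: P => [|[u v] P IH] /=; first by rewrite cnt_top_nil.
move=> /andP[hok hall] /and3P[hu hv hun] hin.
rewrite !in_cons negb_or in hu; move: hu => /andP[_ hu].
have := cnt_top_pair_cons t u1 u2 hok hu hv.
rewrite IH // => [|pr hpr]; last by apply: hin; rewrite in_cons hpr orbT.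
have := hin (u, v); rewrite in_cons eqxx /= => /(_ isT) ->.
by move=> /eqP; rewrite eqn_add2r => /eqP.
Qed.

Lemma cnt_top_union_separated Y P t pr0 : uniq Y.1 -> uniq Y.2 ->
  all (split_pair Y) P -> uniq (pairs_union P) -> pr0 \in P ->
  (forall pr, pr \in P -> pr != pr0 -> (t <= pr.1) = (t <= pr.2)) ->
  cnt_top Y (pairs_union P) t = cnt_top Y [:: pr0.1; pr0.2] t.
Proof.
move=> u1 u2; elim: P => [|[u v] P IH] //=.
move=> /andP[hok hall] /and3P[hu hv hun] hp0 hin.
rewrite -/(pairs_union P) in hu hv hun *.
rewrite !in_cons negb_or in hu; move: hu => /andP[_ hu].
have step := cnt_top_pair_cons t u1 u2 hok hu hv.
have hinP : forall pr, pr \in P -> pr != pr0 -> (t <= pr.1) = (t <= pr.2).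
  by move=> pr hpr; apply: hin; rewrite in_cons hpr orbT.
case: (eqVneq (u, v) pr0) => [e|ne].
- have hp0P : pr0 \notin P.
    apply/negP => h; move: hu; rewrite mem_pairs_union => /hasP; apply.
    by exists pr0 => //; rewrite -e eqxx.
  rewrite -e /=.
  have h1 : cnt_top Y (pairs_union P) t = cnt_ge Y.1 t.
    apply: cnt_top_union_unseparated => // pr hpr; apply: hinP => //.
    by apply/eqP => e2; move: hp0P; rewrite -e2 hpr.
  by have := cnt_top_pair t u1 u2 hok; rewrite -h1 -step => /eqP; rewrite eqn_add2r => /eqP.
- move: hp0; rewrite in_cons eq_sym (negbTE ne) /= => hp0.
  have huv : (t <= u) = (t <= v) by apply: (hin (u, v)); rewrite ?in_cons ?eqxx.
  rewrite -IH //.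
  by move: step; rewrite huv => /eqP; rewrite eqn_add2r => /eqP.
Qed.

(* * Admissible constraints and good pairs *)

Definition cnt_total (Y : symbol) (t : nat) : nat := cnt_ge Y.1 t + cnt_ge Y.2 t.

Record admissible (Y : symbol) (V : nat -> nat -> Prop) : Prop := Admissible {
  adm_id : forall t, V t (cnt_ge Y.1 t);
  adm_width : forall t k k', V t k -> V t k' -> k <= k' + 1;
  adm_low_flat : forall t k k', V t k -> k + 1 = cnt_ge Y.1 t ->
    V t.+1 k' -> k' + 1 = cnt_ge Y.1 t.+1 -> cnt_total Y t = cnt_total Y t.+1;
  adm_high_flat : forall t, V t (cnt_ge Y.1 t + 1) ->
    V t.+1 (cnt_ge Y.1 t.+1 + 1) -> cnt_total Y t = cnt_total Y t.+1;
  adm_top_switch : forall t k, t \in Y.1 -> V t k -> k + 1 = cnt_ge Y.1 t ->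
    V t.+1 (cnt_ge Y.1 t.+1 + 1) -> False;
  adm_bot_switch : forall t k', t \in Y.2 -> V t (cnt_ge Y.1 t + 1) ->
    V t.+1 k' -> k' + 1 = cnt_ge Y.1 t.+1 -> False
}.

Definition good_pair (Y : symbol) (V : nat -> nat -> Prop) (pr : nat * nat) : Prop :=
  [/\ split_pair Y pr, no_entry_between Y pr.1 pr.2 &
      forall t, V t (cnt_top Y [:: pr.1; pr.2] t)].

Lemma no_entry_between_sym Y u v : no_entry_between Y u v -> no_entry_between Y v u.
Proof. by move=> h z ez; rewrite minnC maxnC; exact: h. Qed.

Lemma no_entry_between_lt Y u v z :
  no_entry_between Y u v -> entry Y z -> u < z -> z < v -> False.
Proof.
move=> h ez a b; have uv := ltnW (ltn_trans a b).
by apply: (h z ez); rewrite (minn_idPl uv) (maxn_idPr uv) a b.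
Qed.

Lemma no_entry_between_gt Y u v z :
  no_entry_between Y u v -> entry Y z -> v < z -> z < u -> False.
Proof. by move=> h; apply: no_entry_between_lt; exact: no_entry_between_sym. Qed.

Lemma adjacent_same_side Y u v v' : entry Y v -> entry Y v' -> v != v' ->
  no_entry_between Y u v -> no_entry_between Y u v' ->
  (v < u /\ v' < u) \/ (u < v /\ u < v') -> False.
Proof.
move=> ev ev' ne h1 h2 hh; move: ne; rewrite neq_ltn => /orP[] lt.
- case: hh => -[a b]; [exact: (no_entry_between_gt h1 ev')|exact: (no_entry_between_lt h2 ev)].
- case: hh => -[a b]; [exact: (no_entry_between_gt h2 ev)|exact: (no_entry_between_lt h1 ev')].
Qed.

Section GoodPairs.

Variables (Y : symbol) (V : nat -> nat -> Prop).
Hypotheses (hY : interlaced Y) (hV : admissible Y V).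

(* Two good pairs u < v < u' sharing the bottom entry v would switch from one
   above to one below across the bottom entry v. *)
Lemma good_pairs_bot_straddle u u' v :
  good_pair Y V (u, v) -> good_pair Y V (u', v) -> u < v -> v < u' -> False.
Proof.
move=> [hok _ hval] [hok' _ hval'] ltu ltu'.
have [_ _ n1 n2 _] := interlaced_facts hY.
have vq : v \in Y.2 by case/and4P: hok.
have h1 := hval v; rewrite /= (pair_cnt_high n1 n2 hok) // in h1.
exact: (adm_bot_switch hV vq h1 (hval' v.+1) (pair_cnt_low n1 n2 hok' (ltnSn v) ltu')).
Qed.

(* Two good pairs v' < u < v sharing the top entry u would switch from one
   below to one above across the top entry u. *)
Lemma good_pairs_top_straddle u v v' :
  good_pair Y V (u, v) -> good_pair Y V (u, v') -> u < v -> v' < u -> False.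
Proof.
move=> [hok _ hval] [hok' _ hval'] ltu ltu'.
have [_ _ n1 n2 _] := interlaced_facts hY.
have up : u \in Y.1 by case/and4P: hok.
have h2 := hval u.+1; rewrite /= (pair_cnt_high n1 n2 hok) // in h2.
exact: (adm_top_switch hV up (hval' u) (pair_cnt_low n1 n2 hok' ltu' (leqnn u)) h2).
Qed.

Lemma split_pair_neq u v : split_pair Y (u, v) -> u != v.
Proof. by case/and4P=> _ uq vq _; apply/eqP => e; move: uq; rewrite e vq. Qed.

Lemma good_pairs_same_bot u u' v :
  good_pair Y V (u, v) -> good_pair Y V (u', v) -> u = u'.
Proof.
move=> h h'; apply/eqP/negPn/negP => neu.
have [hok hb _] := h; have [hok' hb' _] := h'.
have eu : entry Y u by case/and4P: hok => /= up _ _ _; rewrite /entry up.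
have eu' : entry Y u' by case/and4P: hok' => /= up _ _ _; rewrite /entry up.
have side := adjacent_same_side eu eu' neu (no_entry_between_sym hb) (no_entry_between_sym hb').
move: (split_pair_neq hok) (split_pair_neq hok'); rewrite !neq_ltn.
case/orP=> ltu; case/orP=> ltu'.
- exact: side (or_introl (conj ltu ltu')).
- exact: good_pairs_bot_straddle h h' ltu ltu'.
- exact: good_pairs_bot_straddle h' h ltu' ltu.
- exact: side (or_intror (conj ltu ltu')).
Qed.

Lemma good_pairs_same_top u v v' :
  good_pair Y V (u, v) -> good_pair Y V (u, v') -> v = v'.
Proof.
move=> h h'; apply/eqP/negPn/negP => nev.
have [hok hb _] := h; have [hok' hb' _] := h'.
have ev : entry Y v by case/and4P: hok => /= _ _ vq _; rewrite /entry vq orbT.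
have ev' : entry Y v' by case/and4P: hok' => /= _ _ vq _; rewrite /entry vq orbT.
have side := adjacent_same_side ev ev' nev hb hb'.
move: (split_pair_neq hok) (split_pair_neq hok'); rewrite !neq_ltn.
case/orP=> ltu; case/orP=> ltu'.
- exact: side (or_intror (conj ltu ltu')).
- exact: good_pairs_top_straddle h h' ltu ltu'.
- exact: good_pairs_top_straddle h' h ltu' ltu.
- exact: side (or_introl (conj ltu ltu')).
Qed.

Lemma good_pairs_disjoint u v u' v' :
  good_pair Y V (u, v) -> good_pair Y V (u', v') -> (u, v) != (u', v') ->
  [&& u != u', v != v', u != v' & v != u'].
Proof.
move=> h h' ne.
have [/and4P[_ uq _ vp] _ _] := h; have [/and4P[up' _ vq' _] _ _] := h'.
rewrite /= in uq vp up' vq'.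
apply/and4P; split.
- by apply/eqP => e; subst u'; move: ne; rewrite (good_pairs_same_top h h') eqxx.
- by apply/eqP => e; subst v'; move: ne; rewrite (good_pairs_same_bot h h') eqxx.
- by apply/eqP => e; move: uq; rewrite e vq'.
- by apply/eqP => e; move: vp; rewrite e up'.
Qed.

Lemma good_pairs_separation u v u' v' t :
  good_pair Y V (u, v) -> good_pair Y V (u', v') -> (u, v) != (u', v') ->
  (t <= u) != (t <= v) -> (t <= u') = (t <= v').
Proof.
move=> h h' ne.
have /and4P[d1 d2 d3 d4] := good_pairs_disjoint h h' ne.
move: h h' => [/and4P[up uq vq vp] hb _] [/and4P[up' uq' vq' vp'] hb' _].
rewrite /= in up uq vq vp up' uq' vq' vp' hb hb'.
have e1 : entry Y u by rewrite /entry up.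
have e2 : entry Y v by rewrite /entry vq orbT.
have e3 : entry Y u' by rewrite /entry up'.
have e4 : entry Y v' by rewrite /entry vq' orbT.
case: (leqP t u) => a; case: (leqP t v) => b //= _;
case: (leqP t u') => c; case: (leqP t v') => d //=; exfalso.
- move: d1; rewrite neq_ltn => /orP[lt|lt].
  + by apply: (no_entry_between_gt hb' e1); clear -a b c d lt; lia.
  + by apply: (no_entry_between_gt hb e3); clear -a b c d lt; lia.
- move: d3; rewrite neq_ltn => /orP[lt|lt].
  + by apply: (no_entry_between_lt hb' e1); clear -a b c d lt; lia.
  + by apply: (no_entry_between_gt hb e4); clear -a b c d lt; lia.
- move: d4; rewrite neq_ltn => /orP[lt|lt].
  + by apply: (no_entry_between_gt hb' e2); clear -a b c d lt; lia.
  + by apply: (no_entry_between_lt hb e3); clear -a b c d lt; lia.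
- move: d2; rewrite neq_ltn => /orP[lt|lt].
  + by apply: (no_entry_between_lt hb' e2); clear -a b c d lt; lia.
  + by apply: (no_entry_between_lt hb e4); clear -a b c d lt; lia.
Qed.

Lemma uniq_good_pairs_union P : uniq P -> (forall pr, pr \in P -> good_pair Y V pr) ->
  uniq (pairs_union P).
Proof.
elim: P => [|[u v] P IH] //= /andP[hn hu] hall.
rewrite -/(pairs_union P).
have hpr : good_pair Y V (u, v) by apply: hall; rewrite in_cons eqxx.
rewrite IH //; last by move=> pr hpr'; apply: hall; rewrite in_cons hpr' orbT.
have [hok _ _] := hpr.
rewrite in_cons negb_or (split_pair_neq hok) andbT /= !mem_pairs_union.
have disj : forall pr, pr \in P -> [&& u != pr.1, v != pr.2, u != pr.2 & v != pr.1].
  move=> [u' v'] hp; have ne : (u, v) != (u', v') by apply: contraNneq hn => ->.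
  by apply: good_pairs_disjoint => //; apply: hall; rewrite in_cons hp orbT.
by apply/andP; split; apply/hasPn => pr /disj /and4P[? ? ? ?]; rewrite negb_or; apply/andP.
Qed.

End GoodPairs.

(* * Valid moves are unions of good pairs *)

Lemma max_below (Pr : pred nat) x : (exists2 z, z < x & Pr z) ->
  exists y, [/\ y < x, Pr y & forall z, y < z -> z < x -> ~~ Pr z].
Proof.
elim: x => [[z]|x IH [z zx pz]] //.
case hx: (Pr x).
  by exists x; split=> // w a b; exfalso; move: a b; clear; lia.
have zx' : z < x.
  by move: zx; rewrite ltnS leq_eqVlt => /orP[/eqP e|] //; move: pz; rewrite e hx.
have [y [yx py hy]] := IH (ex_intro2 _ _ z zx' pz).
exists y; split=> //; first exact: leq_trans yx _.
move=> w a; rewrite ltnS leq_eqVlt => /orP[/eqP ->|b]; first by rewrite hx.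
exact: hy.
Qed.

Lemma min_above (Pr : pred nat) x : (exists2 z, x < z & Pr z) ->
  exists y, [/\ x < y, Pr y & forall z, x < z -> z < y -> ~~ Pr z].
Proof.
move=> [z xz pz].
have ex : exists n, (x < n) && Pr n by exists z; rewrite xz pz.
case: (ex_minnP ex) => y /andP[xy py] hmin.
exists y; split=> // w a b; apply/negP => pw.
by have := hmin w; rewrite a pw => /(_ isT); move: b; clear; lia.
Qed.

Lemma count_const (s : seq nat) (Q : pred nat) lo hi t :
  (forall z, z \in s -> lo <= z -> z < hi -> False) -> lo <= t -> t <= hi ->
  count (fun z => (t <= z) && Q z) s = count (fun z => (hi <= z) && Q z) s.
Proof.
move=> h a b; apply: eq_in_count => z zs /=; congr (_ && _).
case: (leqP hi z) => c; first by rewrite (leq_trans b c).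
case: (leqP lo z) => d; first by exfalso; exact: h zs d c.
by apply/negbTE; rewrite -ltnNge; exact: leq_trans d a.
Qed.

Lemma cnt_top_const Y M lo hi t :
  (forall z, entry Y z -> lo <= z -> z < hi -> False) -> lo <= t -> t <= hi ->
  cnt_top Y M t = cnt_top Y M hi /\ cnt_ge Y.1 t = cnt_ge Y.1 hi.
Proof.
move=> h a b.
have h1 : forall z, z \in Y.1 -> lo <= z -> z < hi -> False.
  by move=> z zs; apply: h; rewrite /entry zs.
have h2 : forall z, z \in Y.2 -> lo <= z -> z < hi -> False.
  by move=> z zs; apply: h; rewrite /entry zs orbT.
rewrite /cnt_top (count_const _ h1 a b) (count_const _ h2 a b); split=> //.
have := count_const predT h1 a b; rewrite /cnt_ge.
have E (u : nat) : count (fun z => (u <= z) && predT z) Y.1 = count (fun z => u <= z) Y.1.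
  by apply: eq_count => z; rewrite andbT.
by rewrite !E.
Qed.

Lemma cnt_top_zero Y M t : (forall z, entry Y z -> z < t) ->
  cnt_top Y M t = 0 /\ cnt_ge Y.1 t = 0.
Proof.
move=> h.
have h1 : forall z, z \in Y.1 -> z < t by move=> z zs; apply: h; rewrite /entry zs.
have h2 : forall z, z \in Y.2 -> z < t by move=> z zs; apply: h; rewrite /entry zs orbT.
by rewrite /cnt_top !count_ge_below // (cnt_ge_below h1).
Qed.

Lemma singlesP Y z : z \in singles Y ->
  ((z \in Y.1) && (z \notin Y.2)) || ((z \in Y.2) && (z \notin Y.1)).
Proof.
by rewrite /singles mem_filter mem_cat => /andP[]; case: (z \in Y.1); case: (z \in Y.2).
Qed.

Lemma cnt_total_step Y t : uniq Y.1 -> uniq Y.2 ->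
  cnt_total Y t = cnt_total Y t.+1 + (t \in Y.1) + (t \in Y.2).
Proof.
by move=> u1 u2; rewrite /cnt_total (cnt_ge_step t u1) (cnt_ge_step t u2) addnACA !addnA.
Qed.

Lemma entry_total_jump Y y : uniq Y.1 -> uniq Y.2 -> entry Y y ->
  cnt_total Y y = cnt_total Y y.+1 -> False.
Proof.
move=> u1 u2; rewrite /entry (cnt_total_step y u1 u2).
by case: (y \in Y.1); case: (y \in Y.2) => //= _; clear; lia.
Qed.

(* If the move by M changes the top count at x, there is a largest entry
   below x (the counts agree at 0 and only change at entries). *)
Lemma entry_below Y M x : cnt_top Y M 0 = cnt_ge Y.1 0 -> cnt_top Y M x != cnt_ge Y.1 x ->
  exists y, [/\ y < x, entry Y y & forall z, entry Y z -> y < z -> z < x -> False].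
Proof.
move=> h0 hx.
have [y [yx ey hy]] :
    exists y, [/\ y < x, entry Y y & forall z, y < z -> z < x -> ~~ entry Y z].
  apply: max_below; apply: NNPP => hn.
  have hc : forall z, entry Y z -> 0 <= z -> z < x -> False.
    by move=> z ez _ zx; apply: hn; exists z.
  have [e1 e2] := cnt_top_const M hc (leqnn 0) (leq0n x).
  by move: hx; rewrite -e1 -e2 h0 eqxx.
by exists y; split=> // z ez a b; move: (hy z a b); rewrite ez.
Qed.

(* Symmetrically, a smallest entry above x (all counts vanish eventually). *)
Lemma entry_above Y M x : cnt_top Y M x.+1 != cnt_ge Y.1 x.+1 ->
  exists y, [/\ x < y, entry Y y & forall z, entry Y z -> x < z -> z < y -> False].
Proof.
move=> hx.
have [y [yx ey hy]] :
    exists y, [/\ x < y, entry Y y & forall z, x < z -> z < y -> ~~ entry Y z].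
  apply: min_above; apply: NNPP => hn.
  have hc : forall z, entry Y z -> z < x.+1.
    by move=> z ez; rewrite ltnNge; apply/negP => zx; apply: hn; exists z.
  have [e1 e2] := cnt_top_zero M hc.
  by move: hx; rewrite e1 e2 eqxx.
by exists y; split=> // z ez a b; move: (hy z a b); rewrite ez.
Qed.

Lemma no_entry_between_intro Y lo hi : lo < hi ->
  (forall w, entry Y w -> lo < w -> w < hi -> False) ->
  no_entry_between Y lo hi /\ no_entry_between Y hi lo.
Proof.
move=> lt h; have l2 := ltnW lt.
have E : no_entry_between Y lo hi.
  by move=> z ez; rewrite (minn_idPl l2) (maxn_idPr l2) => /andP[a b]; exact: h ez a b.
by split=> //; apply: no_entry_between_sym.
Qed.

(* lia, after discarding the hypotheses it cannot use (they slow it down). *)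
Ltac lia_arith := repeat match goal with
  | h : is_true (_ \in _) |- _ => clear h
  | h : is_true (~~ (_ \in _)) |- _ => clear h
  | h : forall _, _ |- _ => clear h
  | h : interlaced _ |- _ => clear h
  | h : admissible _ _ |- _ => clear h
  | h : {subset _ <= _} |- _ => clear h
  end; lia.

Section ValidMoves.

Variables (Y : symbol) (V : nat -> nat -> Prop).
Hypotheses (hY : interlaced Y) (hV : admissible Y V).

Definition valid_set (M : seq nat) : Prop :=
  [/\ {subset M <= singles Y}, cnt_top Y M 0 = cnt_ge Y.1 0 &
      forall t, V t (cnt_top Y M t)].

Variable M : seq nat.
Hypothesis hM : valid_set M.

Lemma valid_set_facts :
  [/\ (forall t, cnt_top Y M t =
         cnt_top Y M t.+1 + ((t \in Y.1) && (t \notin M)) + ((t \in Y.2) && (t \in M))),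
      (forall t, cnt_ge Y.1 t = cnt_ge Y.1 t.+1 + (t \in Y.1)) &
      (forall t, cnt_top Y M t <= cnt_ge Y.1 t + 1 /\ cnt_ge Y.1 t <= cnt_top Y M t + 1)].
Proof.
have [_ _ hval] := hM; have [_ _ u1 u2 _] := interlaced_facts hY.
split=> t; [exact: cnt_top_step|exact: cnt_ge_step|].
by split; apply: (adm_width hV); [exact: hval|exact: adm_id|exact: adm_id|exact: hval].
Qed.

Lemma partner_below_bot x : cnt_top Y M x + 1 = cnt_ge Y.1 x ->
  exists y, [/\ y < x, y \in M, (y \in Y.2) && (y \notin Y.1),
    (forall z, entry Y z -> y < z -> z < x -> False) &
    forall t, y < t -> t <= x -> cnt_top Y M t + 1 = cnt_ge Y.1 t].
Proof.
move=> hx; have [hMs h0 hval] := hM; have [fst Pst wd] := valid_set_facts.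
have [_ _ u1 u2 _] := interlaced_facts hY.
have hne : cnt_top Y M x != cnt_ge Y.1 x by apply/eqP => e; move: hx; rewrite e; clear; lia.
have [y [yx ey hy]] := entry_below h0 hne.
have cst : forall t, y < t -> t <= x ->
    cnt_top Y M t = cnt_top Y M x /\ cnt_ge Y.1 t = cnt_ge Y.1 x.
  by move=> t a b; apply: cnt_top_const a b.
have [c1 c2] := cst y.+1 (ltnSn y) yx.
have fy := fst y; have py := Pst y; have wy := wd y.
case yM: (y \in M); last first.
  exfalso; rewrite yM /= andbT andbF addn0 in fy.
  apply: (entry_total_jump u1 u2 ey); apply: (adm_low_flat hV (hval y) _ (hval y.+1)).
  - by move: fy py; case: (y \in Y.1) => /= fy py; lia_arith.
  - by lia_arith.
have := singlesP (hMs y yM) => /orP[/andP[yp yq]|/andP[yq yp]].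
- exfalso; rewrite yM yp (negbTE yq) /= addn0 in fy; rewrite yp in py.
  by simpl in py; lia_arith.
- exists y; split=> //; first by rewrite yq.
  by move=> t a b; have [d1 d2] := cst t a b; lia_arith.
Qed.

Lemma partner_below_top x : cnt_top Y M x = cnt_ge Y.1 x + 1 ->
  exists y, [/\ y < x, y \in M, (y \in Y.1) && (y \notin Y.2),
    (forall z, entry Y z -> y < z -> z < x -> False) &
    forall t, y < t -> t <= x -> cnt_top Y M t = cnt_ge Y.1 t + 1].
Proof.
move=> hx; have [hMs h0 hval] := hM; have [fst Pst wd] := valid_set_facts.
have [_ _ u1 u2 _] := interlaced_facts hY.
have hne : cnt_top Y M x != cnt_ge Y.1 x by apply/eqP => e; move: hx; rewrite e; clear; lia.
have [y [yx ey hy]] := entry_below h0 hne.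
have cst : forall t, y < t -> t <= x ->
    cnt_top Y M t = cnt_top Y M x /\ cnt_ge Y.1 t = cnt_ge Y.1 x.
  by move=> t a b; apply: cnt_top_const a b.
have [c1 c2] := cst y.+1 (ltnSn y) yx.
have fy := fst y; have py := Pst y; have wy := wd y.
case yM: (y \in M); last first.
  exfalso; rewrite yM /= andbT andbF addn0 in fy.
  have e1 : cnt_top Y M y = cnt_ge Y.1 y + 1.
    by move: fy py; case: (y \in Y.1) => /= fy py; lia_arith.
  have e2 : cnt_top Y M y.+1 = cnt_ge Y.1 y.+1 + 1 by lia_arith.
  have h1 := hval y; have h2 := hval y.+1; rewrite e1 in h1; rewrite e2 in h2.
  exact: (entry_total_jump u1 u2 ey (adm_high_flat hV h1 h2)).
have := singlesP (hMs y yM) => /orP[/andP[yp yq]|/andP[yq yp]].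
- exists y; split=> //; first by rewrite yp.
  by move=> t a b; have [d1 d2] := cst t a b; lia_arith.
- exfalso; rewrite yM yq (negbTE yp) /= in fy; rewrite (negbTE yp) in py.
  by simpl in py; lia_arith.
Qed.

Lemma partner_above_top x : cnt_top Y M x.+1 + 1 = cnt_ge Y.1 x.+1 ->
  exists z, [/\ x < z, z \in M, (z \in Y.1) && (z \notin Y.2),
    (forall w, entry Y w -> x < w -> w < z -> False) &
    forall t, x < t -> t <= z -> cnt_top Y M t + 1 = cnt_ge Y.1 t].
Proof.
move=> hx; have [hMs h0 hval] := hM; have [fst Pst wd] := valid_set_facts.
have [_ _ u1 u2 _] := interlaced_facts hY.
have hne : cnt_top Y M x.+1 != cnt_ge Y.1 x.+1.
  by apply/eqP => e; move: hx; rewrite e; clear; lia.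
have [z [xz ez hz]] := entry_above hne.
have cst : forall t, x < t -> t <= z ->
    cnt_top Y M t = cnt_top Y M z /\ cnt_ge Y.1 t = cnt_ge Y.1 z.
  by move=> t a b; apply: cnt_top_const a b.
have [c1 c2] := cst x.+1 (ltnSn x) xz.
have fz := fst z; have pz := Pst z; have wz := wd z.+1.
case zM: (z \in M); last first.
  exfalso; rewrite zM /= andbT andbF addn0 in fz.
  apply: (entry_total_jump u1 u2 ez); apply: (adm_low_flat hV (hval z) _ (hval z.+1)).
  - by lia_arith.
  - by move: fz pz; case: (z \in Y.1) => /= fz pz; lia_arith.
have := singlesP (hMs z zM) => /orP[/andP[zp zq]|/andP[zq zp]].
- exists z; split=> //; first by rewrite zp.
  by move=> t a b; have [d1 d2] := cst t a b; lia_arith.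
- exfalso; rewrite zM zq (negbTE zp) /= in fz; rewrite (negbTE zp) in pz.
  by simpl in pz; lia_arith.
Qed.

Lemma partner_above_bot x : cnt_top Y M x.+1 = cnt_ge Y.1 x.+1 + 1 ->
  exists z, [/\ x < z, z \in M, (z \in Y.2) && (z \notin Y.1),
    (forall w, entry Y w -> x < w -> w < z -> False) &
    forall t, x < t -> t <= z -> cnt_top Y M t = cnt_ge Y.1 t + 1].
Proof.
move=> hx; have [hMs h0 hval] := hM; have [fst Pst wd] := valid_set_facts.
have [_ _ u1 u2 _] := interlaced_facts hY.
have hne : cnt_top Y M x.+1 != cnt_ge Y.1 x.+1.
  by apply/eqP => e; move: hx; rewrite e; clear; lia.
have [z [xz ez hz]] := entry_above hne.
have cst : forall t, x < t -> t <= z ->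
    cnt_top Y M t = cnt_top Y M z /\ cnt_ge Y.1 t = cnt_ge Y.1 z.
  by move=> t a b; apply: cnt_top_const a b.
have [c1 c2] := cst x.+1 (ltnSn x) xz.
have fz := fst z; have pz := Pst z; have wz := wd z.+1.
case zM: (z \in M); last first.
  exfalso; rewrite zM /= andbT andbF addn0 in fz.
  have e1 : cnt_top Y M z = cnt_ge Y.1 z + 1 by lia_arith.
  have e2 : cnt_top Y M z.+1 = cnt_ge Y.1 z.+1 + 1.
    by move: fz pz; case: (z \in Y.1) => /= fz pz; lia_arith.
  have h1 := hval z; have h2 := hval z.+1; rewrite e1 in h1; rewrite e2 in h2.
  exact: (entry_total_jump u1 u2 ez (adm_high_flat hV h1 h2)).
have := singlesP (hMs z zM) => /orP[/andP[zp zq]|/andP[zq zp]].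
- exfalso; rewrite zM zp (negbTE zq) /= addn0 in fz; rewrite zp in pz.
  by simpl in pz; lia_arith.
- exists z; split=> //; first by rewrite zq.
  by move=> t a b; have [d1 d2] := cst t a b; lia_arith.
Qed.

Lemma good_pair_intro u v : split_pair Y (u, v) -> no_entry_between Y u v ->
  (forall t, minn u v < t -> t <= maxn u v ->
     cnt_top Y M t + (t <= u) = cnt_ge Y.1 t + (t <= v)) ->
  good_pair Y V (u, v).
Proof.
move=> hok hb h; have [_ _ hval] := hM; have [_ _ u1 u2 _] := interlaced_facts hY.
split=> // t /=.
case e: ((t <= u) == (t <= v)).
  by rewrite (pair_cnt_out u1 u2 hok (eqP e)); exact: adm_id.
have [a b] : minn u v < t /\ t <= maxn u v.
  by move: e; case: (leqP t u) => c; case: (leqP t v) => d //= _; split; clear -c d; lia.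
have := h t a b; have := cnt_top_pair t u1 u2 hok => e1 e2.
have -> : cnt_top Y [:: u; v] t = cnt_top Y M t.
  by move: e1; rewrite -e2 => /eqP; rewrite eqn_add2r => /eqP.
exact: hval.
Qed.

Lemma partner_of_top x : x \in M -> x \in Y.1 -> x \notin Y.2 ->
  exists2 v, good_pair Y V (x, v) & v \in M.
Proof.
move=> xM xp xq; have [fst Pst wd] := valid_set_facts.
have fx := fst x; have px := Pst x; have wx := wd x; have wx1 := wd x.+1.
rewrite xM xp (negbTE xq) /= !addn0 in fx; rewrite xp /= in px.
case: (eqVneq (cnt_top Y M x.+1) (cnt_ge Y.1 x.+1)) => e.
- have hx : cnt_top Y M x + 1 = cnt_ge Y.1 x by lia_arith.
  have [y [yx yM /andP[yq yp] hy hi]] := partner_below_bot hx.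
  exists y => //; have [_ nb] := no_entry_between_intro yx hy.
  apply: good_pair_intro => //; first by rewrite /split_pair /= xp xq yq yp.
  move=> t; rewrite (minn_idPr (ltnW yx)) (maxn_idPl (ltnW yx)) => a b.
  by rewrite b (leqNgt t y) a /= (hi t a b) ?addn0.
- have hx : cnt_top Y M x.+1 = cnt_ge Y.1 x.+1 + 1 by lia_arith.
  have [z [xz zM /andP[zq zp] hz hi]] := partner_above_bot hx.
  exists z => //; have [nb _] := no_entry_between_intro xz hz.
  apply: good_pair_intro => //; first by rewrite /split_pair /= xp xq zq zp.
  move=> t; rewrite (minn_idPl (ltnW xz)) (maxn_idPr (ltnW xz)) => a b.
  by rewrite b (leqNgt t x) a /= (hi t a b) ?addn0.
Qed.

Lemma partner_of_bot x : x \in M -> x \in Y.2 -> x \notin Y.1 ->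
  exists2 u, good_pair Y V (u, x) & u \in M.
Proof.
move=> xM xq xp; have [fst Pst wd] := valid_set_facts.
have fx := fst x; have px := Pst x; have wx := wd x; have wx1 := wd x.+1.
rewrite xM xq (negbTE xp) /= addn0 in fx; rewrite (negbTE xp) /= addn0 in px.
case: (eqVneq (cnt_top Y M x.+1) (cnt_ge Y.1 x.+1)) => e.
- have hx : cnt_top Y M x = cnt_ge Y.1 x + 1 by lia_arith.
  have [y [yx yM /andP[yp yq] hy hi]] := partner_below_top hx.
  exists y => //; have [nb _] := no_entry_between_intro yx hy.
  apply: good_pair_intro => //; first by rewrite /split_pair /= xp xq yq yp.
  move=> t; rewrite (minn_idPl (ltnW yx)) (maxn_idPr (ltnW yx)) => a b.
  by rewrite b (leqNgt t y) a /= (hi t a b) ?addn0.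
- have hx : cnt_top Y M x.+1 + 1 = cnt_ge Y.1 x.+1 by lia_arith.
  have [z [xz zM /andP[zp zq] hz hi]] := partner_above_top hx.
  exists z => //; have [_ nb] := no_entry_between_intro xz hz.
  apply: good_pair_intro => //; first by rewrite /split_pair /= xp xq zq zp.
  move=> t; rewrite (minn_idPr (ltnW xz)) (maxn_idPl (ltnW xz)) => a b.
  by rewrite b (leqNgt t x) a /= (hi t a b) ?addn0.
Qed.

Lemma partner_exists x : x \in M ->
  exists u v, [/\ good_pair Y V (u, v), u \in M, v \in M & (x == u) || (x == v)].
Proof.
move=> xM; have [hMs _ _] := hM.
case/orP: (singlesP (hMs x xM)) => /andP[x1 x2].
- by have [v hp vM] := partner_of_top xM x1 x2; exists x, v; rewrite eqxx.
- by have [u hp uM] := partner_of_bot xM x1 x2; exists u, x; rewrite eqxx orbT.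
Qed.

End ValidMoves.

Definition valid_move (Y : symbol) (V : nat -> nat -> Prop) (L : symbol) : Prop :=
  Sbar Y L /\ defect L = defect Y /\ forall t, V t (cnt_ge L.1 t).

Lemma moveM_ext Y M N : (forall z, z \in Y.1 ++ Y.2 -> (z \in M) = (z \in N)) ->
  moveM Y M = moveM Y N.
Proof.
move=> h; rewrite /moveM.
have h1 z : z \in Y.1 -> (z \in M) = (z \in N) by move=> zs; apply: h; rewrite mem_cat zs.
have h2 z : z \in Y.2 -> (z \in M) = (z \in N) by move=> zs; apply: h; rewrite mem_cat zs orbT.
rewrite (@eq_in_filter _ (fun x => x \notin M) (fun x => x \notin N) Y.1); last by move=> z /h1 ->.
rewrite (@eq_in_filter _ (fun x => x \in M) (fun x => x \in N) Y.2); last by move=> z /h2 ->.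
rewrite (@eq_in_filter _ (fun x => x \notin M) (fun x => x \notin N) Y.2); last by move=> z /h2 ->.
by rewrite (@eq_in_filter _ (fun x => x \in M) (fun x => x \in N) Y.1); last by move=> z /h1 ->.
Qed.

Lemma defect_move Y M : defect (moveM Y M) = defect Y <-> cnt_top Y M 0 = cnt_ge Y.1 0.
Proof.
have := cnt_ge_move_total Y M 0; rewrite -cnt_ge_move_top !cnt_ge0 /defect => h.
move: h; set a := size _; set b := size _; set c := size _; set d := size _ => h.
by split=> e; lia.
Qed.

Lemma subseq_filterP (T : eqType) (P : T -> Prop) (s : seq T) :
  exists s', subseq s' s /\ forall x, x \in s' <-> (x \in s /\ P x).
Proof.
elim: s => [|x s [s1 [hs1 hm]]].
  by exists [::]; split=> // y; rewrite in_nil; split=> // [[]].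
case: (classic (P x)) => hP.
- exists (x :: s1); split; first by rewrite /= eqxx.
  by move=> y; rewrite !in_cons; case: (eqVneq y x) => [->|ne] //=; exact: hm.
- exists s1; split; first exact: subseq_trans hs1 (subseq_cons s x).
  move=> y; rewrite hm in_cons; case: (eqVneq y x) => [->|ne] //=.
  by split=> [[]|[]].
Qed.

Section PairUnions.

Variables (Y : symbol) (V : nat -> nat -> Prop).
Hypotheses (hY : interlaced Y) (hV : admissible Y V).

Variable P0 : seq (nat * nat).
Hypothesis sub_P0 : subseq P0 [seq (x, y) | x <- Y.1, y <- Y.2].
Hypothesis mem_P0 : forall pr, pr \in P0 <-> pr \in [seq (x, y) | x <- Y.1, y <- Y.2] /\
                                              good_pair Y V pr.

Lemma uniq_P0 : uniq P0.
Proof.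
apply: subseq_uniq sub_P0 _; have [_ _ u1 u2 _] := interlaced_facts hY.
by apply: allpairs_uniq => // -[a b] [c d] _ _ /=.
Qed.

Lemma good_P0 pr : pr \in P0 -> good_pair Y V pr.
Proof. by move=> /mem_P0 []. Qed.

Lemma good_in_P0 u v : good_pair Y V (u, v) -> (u, v) \in P0.
Proof.
move=> h; apply/mem_P0; split=> //; have [/and4P[up _ vq _] _ _] := h.
exact: allpairs_f.
Qed.

Lemma P0_disj_cons_pairs : disj_cons_pairs Y P0.
Proof.
split; last by apply: (uniq_good_pairs_union hY hV uniq_P0) => pr /good_P0.
by move=> [u v] /good_P0 [/and4P[up uq vq vp] hb _]; exact: adjacent_cons_pair.
Qed.

Lemma valid_move_pair_union M : valid_set Y V M ->
  moveM Y M = moveM Y (pairs_union [seq pr <- P0 | pr.1 \in M]).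
Proof.
move=> hM; apply: moveM_ext => z _; apply/idP/idP.
- move=> zM; have [u [v [hp uM vM hz]]] := partner_exists hY hV hM zM.
  rewrite mem_pairs_union; apply/hasP; exists (u, v) => //.
  by rewrite mem_filter /= uM good_in_P0.
- rewrite mem_pairs_union => /hasP [[u v]]; rewrite mem_filter /= => /andP[uM hin] hz.
  have [u' [v' [hp' uM' vM' hz']]] := partner_exists hY hV hM uM.
  have e : (u, v) = (u', v').
    apply/eqP; apply: contraT => ne.
    have /and4P[d1 _ d3 _] := good_pairs_disjoint hY hV (good_P0 hin) hp' ne.
    by move: hz'; rewrite (negbTE d1) (negbTE d3).
  case: e => eu ev; subst u' v'.
  by case/orP: hz => /eqP ->.
Qed.

(* Conversely the move by any union of good pairs is valid: at each t at most
   one of the pairs is separated by t, and it alone determines the count. *)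
Lemma pair_union_valid P : subseq P P0 -> valid_move Y V (moveM Y (pairs_union P)).
Proof.
move=> hP; have [_ _ u1 u2 _] := interlaced_facts hY.
have goodP pr : pr \in P -> good_pair Y V pr by move/(mem_subseq hP)/good_P0.
have uU : uniq (pairs_union P).
  by apply: (uniq_good_pairs_union hY hV (subseq_uniq hP uniq_P0)).
have okP : all (split_pair Y) P by apply/allP => pr /goodP [].
split; last split.
- exists (pairs_union P); split=> // z; rewrite mem_pairs_union => /hasP [[u v] hin hz].
  have [/and4P[up uq vq vp] _ _] := goodP _ hin.
  rewrite /singles mem_filter mem_cat; rewrite /= in up uq vq vp.
  by case/orP: hz => /eqP ->; [rewrite up (negbTE uq) | rewrite vq (negbTE vp)].
- by apply/defect_move; apply: cnt_top_union_unseparated.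
- move=> t; rewrite cnt_ge_move_top.
  case: (boolP (has (fun pr : nat * nat => (t <= pr.1) != (t <= pr.2)) P)).
  + move=> /hasP [[u v] hin hi].
    rewrite (cnt_top_union_separated u1 u2 okP uU hin); first by have [_ _] := goodP _ hin.
    move=> [u' v'] hin' ne; rewrite eq_sym in ne.
    exact: (good_pairs_separation hY hV (goodP _ hin) (goodP _ hin') ne hi).
  + move=> /hasPn hn; rewrite (cnt_top_union_unseparated u1 u2 okP uU); first exact: adm_id.
    by move=> pr /hn; rewrite negbK => /eqP.
Qed.

End PairUnions.

Theorem valid_moves_pair_unions Y V : interlaced Y -> admissible Y V ->
  exists P0, disj_cons_pairs Y P0 /\
    forall L, valid_move Y V L <-> exists P, subseq P P0 /\ L = moveM Y (pairs_union P).
Proof.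
move=> hY hV.
have [P0 [sub_P0 mem_P0]] := subseq_filterP (good_pair Y V) [seq (x, y) | x <- Y.1, y <- Y.2].
exists P0; split; first exact: (P0_disj_cons_pairs hY hV sub_P0 (fun pr => mem_P0 pr)).
move=> L; split; last by move=> [P [hP ->]]; exact: (pair_union_valid hY hV sub_P0 (fun pr => mem_P0 pr) hP).
move=> [[M [hMs ->]] [hd hval]].
have hM : valid_set Y V M.
  by split=> //; [apply/defect_move | move=> t; rewrite -cnt_ge_move_top].
exists [seq pr <- P0 | pr.1 \in M]; split; first exact: filter_subseq.
exact: (valid_move_pair_union hY hV (fun pr => mem_P0 pr) hM).
Qed.

(* * The two admissible windows *)

(* Fixing a symbol X (top count g, total G) and letting a move of Y (total F)
   vary with top count k at t, the conditions of B^+ read as follows.  The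
   beta window also constrains the value at t through the pair (t-1, t). *)
Definition window_alpha (F g G : nat -> nat) (t k : nat) : Prop :=
  [/\ F t <= g t.+1 + k, g t + k <= F t + 1, G t <= g t + k & g t.+1 + k <= G t.+1 + 1].
Definition window_beta (F g G : nat -> nat) (t k : nat) : Prop :=
  [/\ F t <= g t + k, g t + k <= G t + 1 &
      forall s, s.+1 = t -> G s <= g s + k /\ g s + k <= F t + 1].

Lemma interlaced_cnt_bounds Y t : interlaced Y ->
  [/\ cnt_ge Y.2 t <= cnt_ge Y.1 t, cnt_ge Y.1 t <= cnt_ge Y.2 t + 1,
      cnt_ge Y.1 t.+1 <= cnt_ge Y.1 t & cnt_ge Y.2 t.+1 <= cnt_ge Y.2 t].
Proof.
move=> hY; have [_ _ _ _ h] := interlaced_facts hY; have /andP[h1 h2] := h t.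
by split=> //; apply: cnt_ge_mono.
Qed.

Lemma cnt_ge_top_step Y t : interlaced Y -> t \in Y.1 ->
  cnt_ge Y.1 t = cnt_ge Y.1 t.+1 + 1.
Proof.
by move=> hY ht; have [_ _ u1 _ _] := interlaced_facts hY; rewrite (cnt_ge_step t u1) ht.
Qed.

Ltac bounds_at hY hX t :=
  have := interlaced_cnt_bounds t hY; have := interlaced_cnt_bounds t.+1 hY;
  have := interlaced_cnt_bounds t.+2 hY; have := interlaced_cnt_bounds t hX;
  have := interlaced_cnt_bounds t.+1 hX; have := interlaced_cnt_bounds t.+2 hX.

Ltac unpack_windows := repeat match goal with
  | h : window_alpha _ _ _ _ _ |- _ => rewrite /window_alpha /cnt_total /= in h; case: h => ? ? ? ?
  | h : window_beta _ _ _ _ _ |- _ => rewrite /window_beta /cnt_total /= in h; case: h => ? ? ?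
  | h : _ /\ _ |- _ => case: h => ? ?
  | h : [/\ _, _, _ & _] |- _ => case: h => ? ? ? ?
  end.

Lemma window_alpha_admissible Y X : interlaced Y -> interlaced X ->
  (forall t, cnt_total X t <= cnt_total Y t + 1 /\ cnt_total Y t <= cnt_total X t.+1 + 1) ->
  admissible Y (window_alpha (cnt_total Y) (cnt_ge X.1) (cnt_total X)).
Proof.
move=> hY hX hf; rewrite /cnt_total in hf.
split.
- move=> t; have f1 := hf t; have f3 := hf t.+1.
  bounds_at hY hX t => p1 p2 p3 p4 p5 p6; clear hf; unpack_windows.
  by rewrite /window_alpha /cnt_total /=; split; lia.
- move=> t k k' h1 h2.
  by bounds_at hY hX t => p1 p2 p3 p4 p5 p6; clear hf; unpack_windows; lia.
- move=> t k k' h1 e1 h2 e2; have f1 := hf t; have f3 := hf t.+1.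
  bounds_at hY hX t => p1 p2 p3 p4 p5 p6; clear hf; unpack_windows.
  by rewrite /cnt_total; lia.
- move=> t h1 h2; have f1 := hf t; have f3 := hf t.+1.
  bounds_at hY hX t => p1 p2 p3 p4 p5 p6; clear hf; unpack_windows.
  by rewrite /cnt_total; lia.
- move=> t k ht h1 e1 h2; have s1 := cnt_ge_top_step hY ht.
  by bounds_at hY hX t => p1 p2 p3 p4 p5 p6; clear hf ht; unpack_windows; lia.
- move=> t k' ht h1 h2 e1.
  by bounds_at hY hX t => p1 p2 p3 p4 p5 p6; clear hf ht; unpack_windows; lia.
Qed.

Lemma window_beta_admissible Y X : interlaced Y -> interlaced X ->
  (forall t, cnt_total Y t <= cnt_total X t + 1 /\ cnt_total X t <= cnt_total Y t.+1 + 1) ->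
  cnt_total X 0 <= cnt_total Y 0 ->
  admissible Y (window_beta (cnt_total Y) (cnt_ge X.1) (cnt_total X)).
Proof.
move=> hY hX hf h00; rewrite /cnt_total in hf h00.
split.
- move=> t; rewrite /window_beta /cnt_total /=; split.
  + by have f1 := hf t; bounds_at hY hX t => p1 p2 p3 p4 p5 p6; clear hf; unpack_windows; lia.
  + by have f1 := hf t; bounds_at hY hX t => p1 p2 p3 p4 p5 p6; clear hf; unpack_windows; lia.
  + move=> s <-; have f1 := hf s; have f2 := hf s.+1.
    by bounds_at hY hX s => p1 p2 p3 p4 p5 p6; clear hf; unpack_windows; split; lia.
- move=> t k k'; rewrite /window_beta /cnt_total /= => -[a1 a2 a3] [b1 b2 b3].
  case: t a1 a2 a3 b1 b2 b3 => [|s] a1 a2 a3 b1 b2 b3.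
  + by bounds_at hY hX 0 => p1 p2 p3 p4 p5 p6; clear hf a3 b3; unpack_windows; lia.
  + have [a4 a5] := a3 s erefl; have [b4 b5] := b3 s erefl.
    by bounds_at hY hX s => p1 p2 p3 p4 p5 p6; clear hf a3 b3; unpack_windows; lia.
- move=> t k k'; rewrite /window_beta /cnt_total /= => -[a1 a2 a3] e1 [b1 b2 b3] e2.
  have [b4 b5] := b3 t erefl; have f1 := hf t; have f2 := hf t.+1.
  by bounds_at hY hX t => p1 p2 p3 p4 p5 p6; clear hf a3 b3; unpack_windows; lia.
- move=> t; rewrite /window_beta /cnt_total /= => -[a1 a2 a3] [b1 b2 b3].
  have [b4 b5] := b3 t erefl; have f1 := hf t; have f2 := hf t.+1.
  by bounds_at hY hX t => p1 p2 p3 p4 p5 p6; clear hf a3 b3; unpack_windows; lia.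
- move=> t k ht; rewrite /window_beta /cnt_total /= => -[a1 a2 a3] e1 [b1 b2 b3].
  have [b4 b5] := b3 t erefl; have s1 := cnt_ge_top_step hY ht.
  by bounds_at hY hX t => p1 p2 p3 p4 p5 p6; clear hf a3 b3 ht; unpack_windows; lia.
- move=> t k' ht; rewrite /window_beta /cnt_total /= => -[a1 a2 a3] [b1 b2 b3] e1.
  have [b4 b5] := b3 t erefl.
  by bounds_at hY hX t => p1 p2 p3 p4 p5 p6; clear hf a3 b3 ht; unpack_windows; lia.
Qed.

(* * The relation B^+ in counting form *)

Definition cnt_cond_A (L L' : symbol) (t : nat) : Prop :=
  [/\ cnt_ge L'.2 t <= cnt_ge L.1 t.+1, cnt_ge L.1 t <= cnt_ge L'.2 t + 1,
      cnt_ge L'.1 t <= cnt_ge L.2 t.+1 + 1 & cnt_ge L.2 t <= cnt_ge L'.1 t].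
Definition cnt_cond_B (L L' : symbol) (t : nat) : Prop :=
  [/\ cnt_ge L'.2 t <= cnt_ge L.1 t, cnt_ge L.1 t <= cnt_ge L'.2 t.+1 + 1,
      cnt_ge L'.1 t <= cnt_ge L.2 t + 1 & cnt_ge L.2 t <= cnt_ge L'.1 t.+1].

Lemma Bplus_cnt_A Z Z' L L' : size Z'.1 = size Z.2 ->
  sorted geq L.1 -> sorted geq L.2 -> sorted geq L'.1 -> sorted geq L'.2 ->
  size L.1 = (size Z.2).+1 -> size L.2 = size Z.2 ->
  size L'.1 = size Z'.1 -> size L'.2 = size Z'.1 ->
  Bplus Z Z' L L' <-> forall t, cnt_cond_A L L' t.
Proof.
move=> e s1 s2 s3 s4 z1 z2 z3 z4.
have sz1 : size L.1 <= (size L'.2).+1 by rewrite z1 z4 e.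
have sz2 : size L.2 <= size L'.1 by rewrite z2 z3 e.
have D := interleave_below_cnt gtO_exceed leO_trail s1 s4 sz1.
have C := interleave_above_cnt gtO_exceed leO_trail s2 s3 sz2.
rewrite /Bplus /= e eqxx; split.
- move=> [_ [/D [d1 d2] /C [c1 c2]]] t.
  have := d1 t; have := d2 t; have := c1 t; have := c2 t.
  by rewrite !(addn1 t) !addn0 => h1 h2 h3 h4; split.
- move=> h; split; first by rewrite /defect z1 z2 z3 z4 e; lia.
  split; [apply/D|apply/C]; split=> t; have [h1 h2 h3 h4] := h t;
    by rewrite ?(addn1 t) ?addn0.
Qed.

Lemma Bplus_cnt_B Z Z' L L' : size Z'.1 = (size Z.2).+1 ->
  sorted geq L.1 -> sorted geq L.2 -> sorted geq L'.1 -> sorted geq L'.2 ->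
  size L.1 = (size Z.2).+1 -> size L.2 = size Z.2 ->
  size L'.1 = size Z'.1 -> size L'.2 = size Z'.1 ->
  Bplus Z Z' L L' <-> forall t, cnt_cond_B L L' t.
Proof.
move=> e s1 s2 s3 s4 z1 z2 z3 z4.
have sz1 : size L.1 <= (size L'.2).+1 by rewrite z1 z4 e leqnSn.
have sz2 : size L.2 <= size L'.1 by rewrite z2 z3 e leqnSn.
have D := interleave_below_cnt geO_exceed ltO_trail s1 s4 sz1.
have C := interleave_above_cnt geO_exceed ltO_trail s2 s3 sz2.
have ne : (size Z'.1 == size Z.2) = false by rewrite e; apply/negbTE; rewrite neq_ltn ltnSn orbT.
rewrite /Bplus /= ne; split.
- move=> [_ [/D [d1 d2] /C [c1 c2]]] t.
  have := d1 t; have := d2 t; have := c1 t; have := c2 t.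
  by rewrite !(addn1 t) !addn0 => h1 h2 h3 h4; split.
- move=> h; split; first by rewrite /defect z1 z2 z3 z4 e; lia.
  split; [apply/D|apply/C]; split=> t; have [h1 h2 h3 h4] := h t;
    by rewrite ?(addn1 t) ?addn0.
Qed.

Lemma Sbar_info Y L : Sbar Y L ->
  [/\ sorted geq L.1, sorted geq L.2 &
      forall t, cnt_ge L.1 t + cnt_ge L.2 t = cnt_total Y t].
Proof.
move=> [M [_ ->]]; split; [exact: sorted_move_top|exact: sorted_move_bot|].
by move=> t; exact: cnt_ge_move_total.
Qed.

Lemma Sbar_self Y : is_symbol Y -> Sbar Y Y.
Proof.
move=> /andP[s1 s2]; exists [::]; split=> //.
have keep (s : seq nat) : [seq x <- s | x \notin [::]] = s by apply/all_filterP/allP.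
have drop (s : seq nat) : [seq x <- s | x \in [::]] = [::] by rewrite filter_pred0.
rewrite /moveM !keep !drop !cats0 !sorted_sort //; try exact: geq_trans.
- by case: Y s1 s2.
- exact: sdecr_geq.
- exact: sdecr_geq.
Qed.

Lemma defect0_sizes Y L : Sbar Y L -> size Y.2 = size Y.1 ->
  defect L = 0%R <-> (size L.1 = size Y.1 /\ size L.2 = size Y.1).
Proof.
move=> hS e; have [_ _ tot] := Sbar_info hS; have := tot 0.
rewrite /cnt_total !cnt_ge0 e /defect.
move: (size L.1) (size L.2) (size Y.1) => a b c t0.
by split=> [h|[h1 h2]]; [split|]; lia.
Qed.

Lemma defect1_sizes Y L : Sbar Y L -> size Y.1 = (size Y.2).+1 ->
  defect L = 1%R <-> (size L.1 = (size Y.2).+1 /\ size L.2 = size Y.2).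
Proof.
move=> hS e; have [_ _ tot] := Sbar_info hS; have := tot 0.
rewrite /cnt_total !cnt_ge0 e /defect.
move: (size L.1) (size L.2) (size Y.2) => a b c t0.
by split=> [h|[h1 h2]]; [split|]; lia.
Qed.

Definition cnt_cond (Z Z' : symbol) : symbol -> symbol -> nat -> Prop :=
  if size Z'.1 == size Z.2 then cnt_cond_A else cnt_cond_B.

Lemma special1_self Z : special1 Z -> Sbar Z Z /\ defect Z = 1%R.
Proof.
move=> [isZ [szZ _]]; have SZ := Sbar_self isZ.
by split=> //; apply/(defect1_sizes SZ szZ).
Qed.

Lemma special0_self Z' : special0 Z' -> Sbar Z' Z' /\ defect Z' = 0%R.
Proof.
move=> [isZ' [szZ' _]]; have SZ' := Sbar_self isZ'.
by split=> //; apply/(defect0_sizes SZ' (esym szZ')).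
Qed.

Lemma Drel_cnt Z Z' L L' : special1 Z -> special0 Z' ->
  (size Z'.1 = size Z.2 \/ size Z'.1 = (size Z.2).+1) ->
  Drel Z Z' L L' <->
  [/\ Sbar Z L /\ defect L = 1%R, Sbar Z' L' /\ defect L' = 0%R &
      forall t, cnt_cond Z Z' L L' t].
Proof.
move=> [_ [szZ _]] [_ [szZ' _]] hm.
have shape : Sbar Z L /\ defect L = 1%R -> Sbar Z' L' /\ defect L' = 0%R ->
    Bplus Z Z' L L' <-> forall t, cnt_cond Z Z' L L' t.
  move=> [hS hd] [hS' hd'].
  have [s1 s2 _] := Sbar_info hS; have [s3 s4 _] := Sbar_info hS'.
  have [z1 z2] := (defect1_sizes hS szZ).1 hd.
  have [z3 z4] := (defect0_sizes hS' (esym szZ')).1 hd'.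
  rewrite /cnt_cond; case: hm => e.
  - by rewrite e eqxx; exact: Bplus_cnt_A.
  - rewrite e (negbTE (_ : (size Z.2).+1 != size Z.2)) ?neq_ltn ?ltnSn ?orbT //.
    exact: Bplus_cnt_B.
split=> [[hB [hL hL']]|[hL hL' hc]]; first by split=> //; apply/(shape hL hL').
by split=> //; apply/(shape hL hL').
Qed.

Lemma cond_A_left_window X L F : (forall t, cnt_ge L.1 t + cnt_ge L.2 t = F t) ->
  (forall t, cnt_cond_A X L t) <->
  (forall t, window_alpha F (cnt_ge X.1) (cnt_total X) t (cnt_ge L.1 t)).
Proof.
move=> tot; rewrite /cnt_cond_A /window_alpha /cnt_total.
by split=> h t; have := tot t; have := tot t.+1; have [c1 c2 c3 c4] := h t => e1 e0; split; lia.
Qed.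

Lemma cond_B_left_window X L F : (forall t, cnt_ge L.1 t + cnt_ge L.2 t = F t) ->
  (forall t, cnt_cond_B X L t) <->
  (forall t, window_beta F (cnt_ge X.1) (cnt_total X) t (cnt_ge L.1 t)).
Proof.
move=> tot; rewrite /cnt_cond_B /window_beta /cnt_total; split=> h t.
- have [c1 c2 c3 c4] := h t; have := tot t => e.
  split; try lia.
  by move=> s es; subst t; have [d1 d2 d3 d4] := h s; split; lia.
- have [c1 c2 _] := h t; have [_ _ /(_ t erefl) [c3 c4]] := h t.+1.
  by have := tot t; have := tot t.+1 => e1 e0; split; lia.
Qed.

Lemma cond_A_right_window X L F : (forall t, cnt_ge L.1 t + cnt_ge L.2 t = F t) ->
  (forall t, cnt_cond_A L X t) <->
  (forall t, window_beta F (cnt_ge X.1) (cnt_total X) t (cnt_ge L.1 t)).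
Proof.
move=> tot; rewrite /cnt_cond_A /window_beta /cnt_total; split=> h t.
- have [c1 c2 c3 c4] := h t; have := tot t => e.
  split; try lia.
  by move=> s es; subst t; have [d1 d2 d3 d4] := h s; split; lia.
- have [c1 c2 _] := h t; have [_ _ /(_ t erefl) [c3 c4]] := h t.+1.
  by have := tot t; have := tot t.+1 => e1 e0; split; lia.
Qed.

Lemma cond_B_right_window X L F : (forall t, cnt_ge L.1 t + cnt_ge L.2 t = F t) ->
  (forall t, cnt_cond_B L X t) <->
  (forall t, window_alpha F (cnt_ge X.1) (cnt_total X) t (cnt_ge L.1 t)).
Proof.
move=> tot; rewrite /cnt_cond_B /window_alpha /cnt_total.
by split=> h t; have := tot t; have := tot t.+1; have [c1 c2 c3 c4] := h t => e1 e0; split; lia.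
Qed.

Lemma Drel_left_Z Z Z' L' : special1 Z -> special0 Z' ->
  (size Z'.1 = size Z.2 \/ size Z'.1 = (size Z.2).+1) ->
  let W := if size Z'.1 == size Z.2 then window_alpha else window_beta in
  Drel Z Z' Z L' <-> valid_move Z' (W (cnt_total Z') (cnt_ge Z.1) (cnt_total Z)) L'.
Proof.
move=> h1 h0 hm W; rewrite (Drel_cnt _ _ h1 h0 hm).
have [SZ dZ] := special1_self h1; have [_ dZ'] := special0_self h0.
have win : forall L, Sbar Z' L ->
    (forall t, cnt_cond Z Z' Z L t) <->
    (forall t, W (cnt_total Z') (cnt_ge Z.1) (cnt_total Z) t (cnt_ge L.1 t)).
  move=> L /Sbar_info [_ _ tot]; rewrite /W /cnt_cond.
  by case: ifP => _; [exact: cond_A_left_window | exact: cond_B_left_window].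
rewrite /valid_move dZ'; split.
- by move=> [_ [hS hd] hc]; split=> //; split=> //; apply/(win _ hS).
- by move=> [hS [hd hV]]; split=> //; apply/(win _ hS).
Qed.

Lemma Drel_right_Z' Z Z' L : special1 Z -> special0 Z' ->
  (size Z'.1 = size Z.2 \/ size Z'.1 = (size Z.2).+1) ->
  let W := if size Z'.1 == size Z.2 then window_beta else window_alpha in
  Drel Z Z' L Z' <-> valid_move Z (W (cnt_total Z) (cnt_ge Z'.1) (cnt_total Z')) L.
Proof.
move=> h1 h0 hm W; rewrite (Drel_cnt _ _ h1 h0 hm).
have [_ dZ] := special1_self h1; have [SZ' dZ'] := special0_self h0.
have win : forall L, Sbar Z L ->
    (forall t, cnt_cond Z Z' L Z' t) <->
    (forall t, W (cnt_total Z) (cnt_ge Z'.1) (cnt_total Z') t (cnt_ge L.1 t)).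
  move=> L1 /Sbar_info [_ _ tot]; rewrite /W /cnt_cond.
  by case: ifP => _; [exact: cond_A_right_window | exact: cond_B_right_window].
rewrite /valid_move dZ; split.
- by move=> [[hS hd] _ hc]; split=> //; split=> //; apply/(win _ hS).
- by move=> [hS [hd hV]]; split=> //; apply/(win _ hS).
Qed.

Lemma Drel_totals Z Z' L L' : special1 Z -> special0 Z' ->
  (size Z'.1 = size Z.2 \/ size Z'.1 = (size Z.2).+1) -> Drel Z Z' L L' ->
  forall t, if size Z'.1 == size Z.2 then
    cnt_total Z t <= cnt_total Z' t + 1 /\ cnt_total Z' t <= cnt_total Z t.+1 + 1
  else
    cnt_total Z' t <= cnt_total Z t + 1 /\ cnt_total Z t <= cnt_total Z' t.+1 + 1.
Proof.
move=> h1 h0 hm /(Drel_cnt _ _ h1 h0 hm) [[hS _] [hS' _] hc] t.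
have [_ _ tot] := Sbar_info hS; have [_ _ tot'] := Sbar_info hS'.
have := tot t; have := tot t.+1; have := tot' t; have := tot' t.+1.
move: (hc t); rewrite /cnt_cond /cnt_cond_A /cnt_cond_B.
by case: ifP => _ [c1 c2 c3 c4] e1 e2 e3 e4; split; lia.
Qed.

Lemma pair_unions_of_valid (Y : symbol) V (R : symbol -> Prop) :
  interlaced Y -> admissible Y V -> (forall L, R L <-> valid_move Y V L) ->
  exists P0, disj_cons_pairs Y P0 /\
    forall L, R L <-> exists P, subseq P P0 /\ L = moveM Y (pairs_union P).
Proof.
move=> hY hV hR; have [P0 [hP0 hP]] := valid_moves_pair_unions hY hV.
by exists P0; split=> // L; rewrite hR.
Qed.

Lemma special_total0 Z Z' : special1 Z -> special0 Z' ->
  cnt_total Z 0 = (size Z.2).*2.+1 /\ cnt_total Z' 0 = (size Z'.1).*2.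
Proof.
move=> [_ [szZ _]] [_ [szZ' _]].
by rewrite /cnt_total !cnt_ge0 szZ -szZ' -!addnn addSn.
Qed.

Theorem proposition0307 (Z Z' : symbol) :
  special1 Z -> special0 Z' ->
  (size Z'.1 = size Z.2 \/ size Z'.1 = (size Z.2).+1) ->
  (exists L L', Drel Z Z' L L') ->
  (exists P0' : seq (nat * nat), disj_cons_pairs Z' P0' /\
     forall L', Drel Z Z' Z L' <->
       exists P', subseq P' P0' /\ L' = moveM Z' (pairs_union P')) /\
  (exists P0 : seq (nat * nat), disj_cons_pairs Z P0 /\
     forall L, Drel Z Z' L Z' <->
       exists P, subseq P P0 /\ L = moveM Z (pairs_union P)).
Proof.
move=> h1 h0 hm [L [L' hD]].
have iZ := special1_interlaced h1; have iZ' := special0_interlaced h0.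
have hf := Drel_totals h1 h0 hm hD.
have hl L1 := Drel_left_Z L1 h1 h0 hm; have hr L1 := Drel_right_Z' L1 h1 h0 hm.
have [tZ tZ'] := special_total0 h1 h0.
case: hm => e.
- have cA : (size Z'.1 == size Z.2) = true by apply/eqP.
  move: hf hl hr; rewrite cA /= => hf hl hr; split.
  + exact: pair_unions_of_valid iZ' (window_alpha_admissible iZ' iZ hf) hl.
  + have h00 : cnt_total Z' 0 <= cnt_total Z 0 by rewrite tZ tZ' e; lia.
    exact: pair_unions_of_valid iZ (window_beta_admissible iZ iZ' hf h00) hr.
- have cB : (size Z'.1 == size Z.2) = false.
    by rewrite e; apply/negbTE; rewrite neq_ltn ltnSn orbT.
  move: hf hl hr; rewrite cB /= => hf hl hr; split.
  + have h00 : cnt_total Z 0 <= cnt_total Z' 0 by rewrite tZ tZ' e; lia.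
    exact: pair_unions_of_valid iZ' (window_beta_admissible iZ' iZ hf h00) hl.
  + exact: pair_unions_of_valid iZ (window_alpha_admissible iZ iZ' hf) hr.
Qed.
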